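(* Let $\Delta x>0$, $x_i\in\mathbb{R}$, $M\in\mathbb{N}_0$, and let $p_h(x;x_i,\Delta x)=\sum_{m=0}^{M}c_{h_m}\left(\frac{x-x_i}{\Delta x}\right)^m$ be a polynomial of degree $M$. Then $$p_f(x;x_i,\Delta x):=\frac{1}{\Delta x}\int_{x-\frac12\Delta x}^{x+\frac12\Delta x}p_h(\zeta;x_i,\Delta x)\,d\zeta$$ is a polynomial also of degree $M$, $p_f(x;x_i,\Delta x)=\sum_{m=0}^M c_{f_m}\left(\frac{x-x_i}{\Delta x}\right)^m$, with $$c_{f_m}=\sum_{k=0}^{\lfloor (M-m)/2\rfloor}\frac{c_{h_{m+2k}}}{2^{2k}(2k+1)}\binom{m+2k}{2k},\qquad\text{equivalently}\qquad m!\,c_{f_m}=\sum_{k=0}^{\lfloor (M-m)/2\rfloor}\frac{(m+2k)!}{2^{2k}(2k+1)!}c_{h_{m+2k}},$$ for all $m\in\{0,\dots,M\}$. Inversely, $$c_{h_m}=\frac{1}{m!}\sum_{k=0}^{\lfloor (M-m)/2\rfloor}\tau_{2k}\,c_{f_{m+2k}}\,(m+2k)!\qquad\forall m\in\{0,\dots,M\},$$ where $\tau_0=1$ and $\tau_{2k}=\sum_{s=0}^{k-1}\frac{-\tau_{2s}}{2^{2k-2s}(2k-2s+1)!}$ for $k>0$ (equivalently $\tau_n=g_\tau^{(n)}(0)/n!$ with $g_\tau(x)=\frac{x/2}{\sinh(x/2)}$). *)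

From Stdlib Require Import Reals Arith.
From Coquelicot Require Import Coquelicot.
Open Scope R_scope.

Definition ppoly (c : nat -> R) (M : nat) (xi dx x : R) : R :=
  sum_f_R0 (fun m => c m * ((x - xi) / dx) ^ m) M.

Definition pavg (c : nat -> R) (M : nat) (xi dx x : R) : R :=
  RInt (fun z => ppoly c M xi dx z) (x - dx / 2) (x + dx / 2) / dx.

Definition cf (c : nat -> R) (M m : nat) : R :=
  sum_f_R0 (fun k => c (m + 2 * k)%nat / (2 ^ (2 * k) * INR (2 * k + 1))
                      * Binomial.C (m + 2 * k) (2 * k))
           ((M - m) / 2).

(* taus k s = tau_{2s} for s <= k, built by the recursion
   tau_0 = 1, tau_{2k} = sum_{s=0}^{k-1} - tau_{2s} / (2^{2k-2s} (2k-2s+1)!) *)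
Fixpoint taus (k : nat) : nat -> R :=
  match k with
  | O => fun _ => 1
  | S k' =>
      let t := taus k' in
      fun s => if (s <=? k')%nat then t s
               else sum_f_R0 (fun s' => - t s' /
                      (2 ^ (2 * S k' - 2 * s') * INR (fact (2 * S k' - 2 * s' + 1)))) k'
  end.

(* tau k = tau_{2k} *)
Definition tau (k : nat) : R := taus k k.

From Stdlib Require Import Reals Arith Lra Lia.
From Coquelicot Require Import Coquelicot.
Open Scope R_scope.

(* Substituting t = (x - x_i)/dx, the cell average of t^n is
   ((t + 1/2)^(n+1) - (t - 1/2)^(n+1)) / (n+1) = sum_j C(n,j) mu_j t^(n-j), where
   mu_j is the j-th moment of the uniform distribution on [-1/2, 1/2]; the odd
   moments vanish and mu_(2k) = 1/(2^(2k)(2k+1)), which gives cf after regrouping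
   by powers of t.  In terms of a_n := n! c_n and b_n := n! cf_n this says
   b_m = sum_j s_j a_(m+2j) with s_j = 1/(2^(2j)(2j+1)!), the Taylor coefficients of
   sinh(x/2)/(x/2); the recursion for tau makes (tau_(2k)) the convolution inverse
   of (s_j), i.e. the coefficients of (x/2)/sinh(x/2), which inverts the relation. *)

Lemma sum_f_R0_rev (F : nat -> R) (n : nat) :
  sum_f_R0 (fun k => F (n - k)%nat) n = sum_f_R0 F n.
Proof.
  induction n as [|n IH]; [reflexivity|].
  rewrite decomp_sum by lia; simpl pred; rewrite Nat.sub_0_r.
  replace (sum_f_R0 (fun i => F (S n - S i)%nat) n)
    with (sum_f_R0 (fun i => F (n - i)%nat) n) by (apply sum_eq; reflexivity).
  rewrite IH; simpl; ring.
Qed.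

Lemma sum_f_R0_triangle (f : nat -> nat -> R) (N : nat) :
  sum_f_R0 (fun n => sum_f_R0 (fun j => f n j) n) N =
  sum_f_R0 (fun m => sum_f_R0 (fun j => f (m + j)%nat j) (N - m)) N.
Proof.
  induction N as [|N IH]; [reflexivity|].
  simpl sum_f_R0 at 1; rewrite IH.
  transitivity (sum_f_R0 (fun m => sum_f_R0 (fun j => f (m + j)%nat j) (N - m)
                                   + f (S N) (S (N - m))) N + f (S N) 0%nat).
  - rewrite sum_plus, Rplus_assoc; f_equal.
    change (sum_f_R0 (fun l => f (S N) (S (N - l))) N)
      with (sum_f_R0 (fun l => (fun i => f (S N) (S i)) (N - l)%nat) N).
    rewrite sum_f_R0_rev.
    change (sum_f_R0 (fun j => f (S N) j) N + f (S N) (S N))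
      with (sum_f_R0 (fun j => f (S N) j) (S N)).
    rewrite decomp_sum by lia; simpl pred; ring.
  - rewrite tech5, Nat.sub_diag; f_equal.
    + apply sum_eq; intros i Hi; cbv beta.
      replace (S N - i)%nat with (S (N - i)) by lia.
      simpl sum_f_R0 at 2; do 2 f_equal; lia.
    + simpl; rewrite Nat.add_0_r; reflexivity.
Qed.

Lemma sum_f_R0_antidiagonal (g : nat -> nat -> R) (N : nat) :
  sum_f_R0 (fun k => sum_f_R0 (fun j => g k j) (N - k)) N =
  sum_f_R0 (fun n => sum_f_R0 (fun k => g k (n - k)%nat) n) N.
Proof.
  transitivity (sum_f_R0 (fun m =>
                  sum_f_R0 (fun j => g (m + j - j)%nat j) (N - m)) N).
  { apply sum_eq; intros; apply sum_eq; intros; f_equal; lia. }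
  rewrite <- (sum_f_R0_triangle (fun n j => g (n - j)%nat j)).
  apply sum_eq; intros n Hn.
  rewrite <- (sum_f_R0_rev (fun j => g (n - j)%nat j)).
  apply sum_eq; intros k Hk; f_equal; lia.
Qed.

Lemma sum_f_R0_even_terms (G : nat -> R) :
  (forall k, G (2 * k + 1)%nat = 0) ->
  forall L, sum_f_R0 G L = sum_f_R0 (fun k => G (2 * k)%nat) (L / 2).
Proof.
  intros G_odd.
  assert (H : forall K, sum_f_R0 G (2 * K) = sum_f_R0 (fun k => G (2 * k)%nat) K
                     /\ sum_f_R0 G (2 * K + 1) = sum_f_R0 (fun k => G (2 * k)%nat) K).
  { induction K as [|K [IHe IHo]].
    - pose proof (G_odd 0%nat) as G1; simpl in *; rewrite G1; split; ring.
    - assert (E : sum_f_R0 G (2 * S K) = sum_f_R0 (fun k => G (2 * k)%nat) (S K)).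
      { replace (2 * S K)%nat with (S (2 * K + 1)) by lia.
        rewrite tech5, IHo, tech5; do 2 f_equal; lia. }
      split; [exact E|].
      replace (2 * S K + 1)%nat with (S (2 * S K)) by lia.
      rewrite tech5, E; replace (S (2 * S K)) with (2 * S K + 1)%nat by lia.
      rewrite G_odd; ring. }
  intros L; pose proof (Nat.div_mod_eq L 2); pose proof (Nat.mod_upper_bound L 2 ltac:(lia)).
  destruct (H (L / 2)%nat) as [He Ho].
  destruct (L mod 2) as [|[|]] eqn:E; [| |lia].
  - replace L with (2 * (L / 2))%nat at 1 by lia; exact He.
  - replace L with (2 * (L / 2) + 1)%nat at 1 by lia; exact Ho.
Qed.

Lemma sum_f_R0_kronecker (F : nat -> R) (N : nat) :
  sum_f_R0 (fun n => (if (n =? 0)%nat then 1 else 0) * F n) N = F 0%nat.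
Proof. induction N as [|N IH]; [simpl; ring | rewrite tech5, IH; simpl; ring]. Qed.

Lemma div2_sub_double (a k : nat) : (k <= a / 2)%nat -> ((a - 2 * k) / 2 = a / 2 - k)%nat.
Proof.
  intros Hk; pose proof (Nat.div_mod_eq a 2); pose proof (Nat.mod_upper_bound a 2 ltac:(lia)).
  pose proof (Nat.div_mod_eq (a - 2 * k) 2); pose proof (Nat.mod_upper_bound (a - 2 * k) 2 ltac:(lia)).
  lia.
Qed.

Definition ppoly_primitive (c : nat -> R) (M : nat) (xi dx z : R) : R :=
  sum_f_R0 (fun n => c n * dx / INR (S n) * ((z - xi) / dx) ^ S n) M.

Lemma is_derive_ppoly_primitive c M xi dx z : dx <> 0 ->
  is_derive (fun z => ppoly_primitive c M xi dx z) z (ppoly c M xi dx z).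
Proof.
  intros Hdx.
  assert (Hterm : forall n, is_derive
            (fun z => c n * dx / INR (S n) * ((z - xi) / dx) ^ S n) z
            (c n * ((z - xi) / dx) ^ n)).
  { intros n; auto_derive; [auto|].
    change (match n with 0%nat => 1 | S _ => INR n + 1 end) with (INR (S n)).
    assert (INR (S n) <> 0) by (apply not_0_INR; lia).
    change ((z + - xi) * / dx) with ((z - xi) / dx).
    set (u := ((z - xi) / dx) ^ n); field; auto. }
  unfold ppoly_primitive, ppoly; induction M as [|M IH]; [apply Hterm|].
  simpl sum_f_R0; apply (is_derive_plus (fun z => ppoly_primitive c M xi dx z)); auto.
Qed.

Lemma continuous_ppoly c M xi dx z : continuous (ppoly c M xi dx) z.
Proof.
  apply (@ex_derive_continuous R_AbsRing R_NormedModule).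
  unfold ppoly; induction M as [|M IH]; [auto_derive; auto|].
  apply (@ex_derive_plus R_AbsRing R_NormedModule); [exact IH | auto_derive; auto].
Qed.

Lemma RInt_ppoly c M xi dx a b : dx <> 0 ->
  RInt (ppoly c M xi dx) a b =
  ppoly_primitive c M xi dx b - ppoly_primitive c M xi dx a.
Proof.
  intros Hdx; apply is_RInt_unique.
  apply (is_RInt_derive (fun z => ppoly_primitive c M xi dx z)).
  - intros; apply is_derive_ppoly_primitive; auto.
  - intros; apply continuous_ppoly.
Qed.

Definition avg_monomial (n : nat) (t : R) : R :=
  ((t + / 2) ^ S n - (t - / 2) ^ S n) / INR (S n).

Definition box_moment (j : nat) : R :=
  ((/ 2) ^ S j - (- / 2) ^ S j) / INR (S j).

Lemma pavg_avg_monomial c M xi dx x : dx <> 0 ->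
  pavg c M xi dx x = sum_f_R0 (fun n => c n * avg_monomial n ((x - xi) / dx)) M.
Proof.
  intros Hdx; unfold pavg; rewrite RInt_ppoly by auto; unfold ppoly_primitive.
  rewrite <- minus_sum; unfold Rdiv at 1; rewrite Rmult_comm, scal_sum.
  apply sum_eq; intros n Hn; unfold avg_monomial.
  replace ((x + dx / 2 - xi) / dx) with ((x - xi) / dx + / 2) by (field; auto).
  replace ((x - dx / 2 - xi) / dx) with ((x - xi) / dx - / 2) by (field; auto).
  set (p := ((x - xi) / dx + / 2) ^ S n); set (q := ((x - xi) / dx - / 2) ^ S n).
  assert (INR (S n) <> 0) by (apply not_0_INR; lia).
  field; auto.
Qed.

Lemma Binomial_C_succ n i :
  Binomial.C (S n) (S i) = INR (S n) / INR (S i) * Binomial.C n i.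
Proof.
  unfold Binomial.C; change (S n - S i)%nat with (n - i)%nat.
  change (fact (S n)) with (S n * fact n)%nat.
  change (fact (S i)) with (S i * fact i)%nat; rewrite !mult_INR.
  assert (INR (S i) <> 0) by (apply not_0_INR; lia).
  pose proof (INR_fact_neq_0 n); pose proof (INR_fact_neq_0 i).
  pose proof (INR_fact_neq_0 (n - i)).
  field; auto.
Qed.

Lemma avg_monomial_binomial n t :
  avg_monomial n t = sum_f_R0 (fun j => Binomial.C n j * box_moment j * t ^ (n - j)) n.
Proof.
  unfold avg_monomial; rewrite (Rplus_comm t), binomial.
  replace (t - / 2) with (- / 2 + t) by ring; rewrite binomial, <- minus_sum.
  rewrite decomp_sum by lia; simpl pred.
  unfold Rdiv; rewrite Rmult_plus_distr_r.
  match goal with |- ?A * _ + _ = _ => replace A with 0 by (simpl pow; ring) end.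
  rewrite Rmult_0_l, Rplus_0_l, Rmult_comm, scal_sum.
  apply sum_eq; intros i Hi; change (S n - S i)%nat with (n - i)%nat.
  rewrite Binomial_C_succ; unfold box_moment.
  set (a := (/ 2) ^ S i); set (b := (- / 2) ^ S i); set (d := t ^ (n - i)).
  assert (INR (S i) <> 0) by (apply not_0_INR; lia).
  assert (INR (S n) <> 0) by (apply not_0_INR; lia).
  field; auto.
Qed.

Lemma pow_opp_half_even k : (- / 2) ^ (2 * k) = (/ 2) ^ (2 * k).
Proof. rewrite !pow_mult; f_equal; field. Qed.

Lemma box_moment_even k : box_moment (2 * k) = / (2 ^ (2 * k) * INR (2 * k + 1)).
Proof.
  unfold box_moment.
  change ((/ 2) ^ S (2 * k)) with (/ 2 * (/ 2) ^ (2 * k)).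
  change ((- / 2) ^ S (2 * k)) with (- / 2 * (- / 2) ^ (2 * k)).
  rewrite pow_opp_half_even, pow_inv.
  replace (S (2 * k)) with (2 * k + 1)%nat by lia.
  assert (INR (2 * k + 1) <> 0) by (apply not_0_INR; lia).
  assert (2 ^ (2 * k) <> 0) by (apply pow_nonzero; lra).
  set (p := 2 ^ (2 * k)) in *; field; auto.
Qed.

Lemma box_moment_odd k : box_moment (2 * k + 1) = 0.
Proof.
  unfold box_moment; replace (S (2 * k + 1)) with (2 * S k)%nat by lia.
  rewrite pow_opp_half_even; unfold Rdiv; ring.
Qed.

Lemma pavg_ppoly c M xi dx x : dx <> 0 ->
  pavg c M xi dx x = ppoly (cf c M) M xi dx x.
Proof.
  intros Hdx; rewrite pavg_avg_monomial by auto; set (t := (x - xi) / dx).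
  transitivity (sum_f_R0 (fun n => sum_f_R0 (fun j =>
      (fun n j => Binomial.C n j * box_moment j * t ^ (n - j) * c n) n j) n) M).
  { apply sum_eq; intros n Hn; rewrite avg_monomial_binomial, scal_sum; reflexivity. }
  rewrite sum_f_R0_triangle; unfold ppoly; fold t.
  apply sum_eq; intros m Hm.
  rewrite (sum_f_R0_even_terms
             (fun j => Binomial.C (m + j) j * box_moment j * t ^ (m + j - j) * c (m + j)%nat)).
  2: { intros k; rewrite box_moment_odd; ring. }
  rewrite (Rmult_comm (cf c M m)); unfold cf; rewrite scal_sum.
  apply sum_eq; intros k Hk.
  replace (m + 2 * k - 2 * k)%nat with m by lia; rewrite box_moment_even.
  unfold Rdiv; ring.
Qed.

Lemma cf_top c M : cf c M M = c M.
Proof.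
  unfold cf; rewrite Nat.sub_diag; simpl sum_f_R0.
  rewrite Nat.add_0_r; unfold Binomial.C; rewrite Nat.sub_0_r; simpl.
  pose proof (INR_fact_neq_0 M); field; auto.
Qed.

Definition sinhc_coef (j : nat) : R := / (2 ^ (2 * j) * INR (fact (2 * j + 1))).

Lemma fact_cf c M m :
  INR (fact m) * cf c M m =
  sum_f_R0 (fun k => INR (fact (m + 2 * k)) /
     (2 ^ (2 * k) * INR (fact (2 * k + 1))) * c (m + 2 * k)%nat) ((M - m) / 2).
Proof.
  unfold cf; rewrite scal_sum; apply sum_eq; intros k Hk.
  unfold Binomial.C; replace (m + 2 * k - 2 * k)%nat with m by lia.
  replace (2 * k + 1)%nat with (S (2 * k)) by lia.
  change (fact (S (2 * k))) with (S (2 * k) * fact (2 * k))%nat; rewrite mult_INR.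
  set (p := 2 ^ (2 * k)).
  assert (p <> 0) by (apply pow_nonzero; lra).
  assert (INR (S (2 * k)) <> 0) by (apply not_0_INR; lia).
  pose proof (INR_fact_neq_0 m); pose proof (INR_fact_neq_0 (2 * k)).
  pose proof (INR_fact_neq_0 (m + 2 * k)).
  field; auto.
Qed.

Lemma fact_cf_sinhc c M m :
  cf c M m * INR (fact m) =
  sum_f_R0 (fun j => sinhc_coef j * (INR (fact (m + 2 * j)) * c (m + 2 * j)%nat))
           ((M - m) / 2).
Proof.
  rewrite Rmult_comm, fact_cf; apply sum_eq; intros; unfold sinhc_coef, Rdiv; ring.
Qed.

Lemma taus_le k s : (s <= k)%nat -> taus k s = tau s.
Proof.
  induction k as [|k IH]; intros Hs.
  - replace s with 0%nat by lia; reflexivity.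
  - destruct (Nat.le_gt_cases s k) as [H|H].
    + cbn [taus]; rewrite (proj2 (Nat.leb_le _ _) H); auto.
    + replace s with (S k) by lia; reflexivity.
Qed.

Lemma tau_succ k : tau (S k) = sum_f_R0 (fun s => - tau s /
    (2 ^ (2 * S k - 2 * s) * INR (fact (2 * S k - 2 * s + 1)))) k.
Proof.
  unfold tau at 1; cbn [taus].
  rewrite (proj2 (Nat.leb_gt _ _) (Nat.lt_succ_diag_r k)).
  apply sum_eq; intros s Hs; rewrite taus_le by lia; reflexivity.
Qed.

Lemma tau_sinhc_inverse n :
  sum_f_R0 (fun k => tau k * sinhc_coef (n - k)) n = if (n =? 0)%nat then 1 else 0.
Proof.
  destruct n as [|k]; [unfold tau, sinhc_coef; simpl; field|].
  rewrite tech5, tau_succ, Nat.sub_diag.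
  replace (sinhc_coef 0) with 1 by (unfold sinhc_coef; simpl; field).
  rewrite Rmult_1_r, <- sum_plus.
  transitivity (sum_f_R0 (fun _ => 0) k); [|rewrite sum_cte; simpl; ring].
  apply sum_eq; intros s Hs; unfold sinhc_coef.
  replace (2 * (S k - s))%nat with (2 * S k - 2 * s)%nat by lia.
  set (p := 2 ^ (2 * S k - 2 * s)).
  assert (p <> 0) by (apply pow_nonzero; lra).
  pose proof (INR_fact_neq_0 (2 * S k - 2 * s + 1)).
  field; auto.
Qed.

Lemma c_of_cf c M m :
  c m = / INR (fact m) *
     sum_f_R0 (fun k => tau k * cf c M (m + 2 * k) * INR (fact (m + 2 * k))) ((M - m) / 2).
Proof.
  set (N := ((M - m) / 2)%nat).
  set (a := fun n => INR (fact n) * c n).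
  transitivity (/ INR (fact m) * sum_f_R0 (fun k => sum_f_R0 (fun j =>
      (fun k j => tau k * sinhc_coef j * a (m + 2 * (k + j))%nat) k j) (N - k)) N).
  2: { f_equal; apply sum_eq; intros k Hk.
       rewrite Rmult_assoc, fact_cf_sinhc.
       replace (M - (m + 2 * k))%nat with (M - m - 2 * k)%nat by lia.
       rewrite div2_sub_double, scal_sum by exact Hk; apply sum_eq; intros j Hj; unfold a.
       replace (m + 2 * k + 2 * j)%nat with (m + 2 * (k + j))%nat by lia; ring. }
  rewrite sum_f_R0_antidiagonal.
  transitivity (/ INR (fact m) * sum_f_R0 (fun n =>
     (if (n =? 0)%nat then 1 else 0) * a (m + 2 * n)%nat) N).
  2: { f_equal; apply sum_eq; intros n Hn.
       rewrite <- tau_sinhc_inverse, Rmult_comm, scal_sum.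
       apply sum_eq; intros k Hk; replace (k + (n - k))%nat with n by lia; ring. }
  rewrite sum_f_R0_kronecker; unfold a; rewrite Nat.add_0_r.
  pose proof (INR_fact_neq_0 m); field; auto.
Qed.

Theorem lemma3 (dx xi : R) (M : nat) (c : nat -> R)
  (hdx : 0 < dx) (hdeg : c M <> 0) :
  (forall x : R, pavg c M xi dx x = ppoly (cf c M) M xi dx x)
  /\ cf c M M <> 0
  /\ (forall m : nat, (m <= M)%nat ->
        INR (fact m) * cf c M m =
        sum_f_R0 (fun k => INR (fact (m + 2 * k)) /
                             (2 ^ (2 * k) * INR (fact (2 * k + 1))) * c (m + 2 * k)%nat)
                 ((M - m) / 2))
  /\ (forall m : nat, (m <= M)%nat ->
        c m = / INR (fact m) *
              sum_f_R0 (fun k => tau k * cf c M (m + 2 * k) * INR (fact (m + 2 * k)))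
                       ((M - m) / 2)).
Proof.
  split; [intros x; apply pavg_ppoly; lra|].
  split; [rewrite cf_top; exact hdeg|].
  split; intros m _; [apply fact_cf | apply c_of_cf].
Qed.
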